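(* In the multi-user imperfect-prediction setting below, for all $\lambda\ge0$, $$g_I^l(\lambda)\le g_I(\lambda)\le g_I^u(\lambda),$$ and consequently $\min_{\lambda\ge0}g_I^l(\lambda)\le\min_{\lambda\ge0}g_I(\lambda)\le\min_{\lambda\ge0}g_I^u(\lambda)$.
   Context: $N$ users; $B>0$; $a_{\max}>0$. User $n$ has arrival rate $a_n\ge0$, true-positive rate $p_n$ and false-negative rate $q_n$ with $0\le q_n<p_n\le1$ and $q_n\le a_n/a_{\max}\le p_n$, $\tilde a_n=\frac{a_n-a_{\max}q_n}{p_n-q_n}$, a probability vector $\boldsymbol\eta_n$ on its channel states, $\beta_n\ge0$, integers $\tau_n\ge1$, $D_n\ge1$, a Markov channel on $\{1,\dots,K_n\}$ with transition matrix $(P_n^{i,j})$, a finite $\mathcal E\subset[0,\infty)$ containing $0$ and a positive element, and $\zeta_n(i,\cdot):\mathcal E\to[0,1]$ with $\zeta_n(i,0)=0$, $\zeta_n(i,e)>0$ for $e>0$, strictly increasing; states totally ordered by $\zeta_n$ (for all $i,j$ either $\zeta_n(i,e)\ge\zeta_n(j,e)\ \forall e$ or $\le\ \forall e$) with extremal states $i_n^{\max},i_n^{\min}$. For $\lambda\ge0$ (all functions depend on $\lambda$): $V_n^l(0)=0$, $V_n^l(\tau)=\max_{e>0}\frac{1-[1-\zeta_n(i_n^{\min},e)]^{\tau}}{\zeta_n(i_n^{\min},e)}[-\lambda e+\zeta_n(i_n^{\min},e)\beta_n]$; $V_n^u(0)=0$, $V_n^u(\tau)=\sum_{z=1}^{\tau}\max_{e}\{-\lambda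 e+\zeta_n(i_n^{\max},e)(\beta_n-\max\{0,V_n^l(z-1)\})\}$; for $\tau_n\le\tau\le\tau_n+D_n$, $\tilde V_n^l(\tau)=\max_{e>0}\{-(1-p_n)\frac{1-[1-\zeta_n(i_n^{\min},e)]^{\tau-\tau_n}}{\zeta_n(i_n^{\min},e)}\lambda e+p_n\frac{1-[1-\zeta_n(i_n^{\min},e)]^{\tau}}{\zeta_n(i_n^{\min},e)}[-\lambda e+\zeta_n(i_n^{\min},e)\beta_n]\}$ and $\tilde V_n^u(\tau)=\sum_{z=\tau_n+1}^{\tau}\max_e\{-\lambda e+\zeta_n(i_n^{\max},e)(p_n\beta_n-\max\{0,\tilde V_n^l(\tau_n),\tilde V_n^l(z-1)\})\}+p_n\sum_{z=1}^{\tau_n}\max_e\{-\lambda e+\zeta_n(i_n^{\max},e)(\beta_n-\max\{0,V_n^l(z-1)\})\}$ (maxima over $e\in\mathcal E$). The imperfect-prediction value function $V_n^I$: $V_n^I(0,0,i)=0$; $V_n^I(0,\tau,i)=\max_e\{-\lambda e+\zeta_n(i,e)\beta_n+(1-\zeta_n(i,e))\sum_jP_n^{i,j}V_n^I(0,\tau-1,j)\}$ for $1\le\tau\le\tau_n$; $V_n^I(0,\tau_n+1,i)=\max_e\{-\lambda e+\zeta_n(i,e)p_n\beta_n+p_n(1-\zeta_n(i,e))\sum_jP_n^{i,j}V_n^I(0,\tau_n,j)\}$; $V_n^I(0,\tau,i)=\max_e\{-\lambda e+\zeta_n(i,e)p_n\beta_n+(1-\zeta_n(i,e))\sum_jP_n^{i,j}V_n^I(0,\tau-1,j)\}$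 for $\tau_n+2\le\tau\le\tau_n+D_n$. Define $g_I(\lambda)=\lambda B+\sum_n\big[\tilde a_n\sum_i\eta_n^iV_n^I(0,\tau_n+D_n,i)+(a_{\max}-\tilde a_n)q_n\sum_i\eta_n^iV_n^I(0,\tau_n,i)\big]$, $g_I^u(\lambda)=\lambda B+\sum_n\{\tilde a_n\min[p_n\beta_n,\tilde V_n^u(\tau_n+D_n)]+(a_{\max}-\tilde a_n)q_n\min[\beta_n,V_n^u(\tau_n)]\}$, $g_I^l(\lambda)=\lambda B+\sum_n\{\tilde a_n\max[0,\tilde V_n^l(\tau_n),\tilde V_n^l(\tau_n+D_n)]+(a_{\max}-\tilde a_n)q_n\max[0,V_n^l(\tau_n)]\}$. $g_I$ is the Lagrange dual function with imperfect prediction. *)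

From Stdlib Require Import Reals Lra List.
Import ListNotations.
Open Scope R_scope.

Fixpoint sumR (f : nat -> R) (n : nat) : R :=
  match n with O => 0 | S k => sumR f k + f k end.

(* sum_{z = lo}^{hi} f z  (empty when hi < lo) *)
Definition sum_range (lo hi : nat) (f : nat -> R) : R :=
  sumR (fun k => f (lo + k)%nat) (S hi - lo).

(* maximum of f over a (nonempty) list; 0 for the empty list (never used) *)
Definition maxL (f : R -> R) (l : list R) : R :=
  match l with
  | [] => 0
  | x :: l' => fold_right (fun y m => Rmax (f y) m) (f x) l'
  end.

Definition posb (e : R) : bool := if Rlt_dec 0 e then true else false.

(* Model data. Users are indexed 0..N-1, channel states of user n by
   0..K n - 1. *)
Record Model := mkModel {
  m_N : nat;
  m_B : R;
  m_amax : R;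
  m_a : nat -> R;
  m_p : nat -> R;                 (* true-positive rate *)
  m_q : nat -> R;                 (* false-negative rate *)
  m_eta : nat -> nat -> R;
  m_beta : nat -> R;
  m_tau : nat -> nat;
  m_D : nat -> nat;
  m_K : nat -> nat;
  m_P : nat -> nat -> nat -> R;
  m_E : list R;
  m_zeta : nat -> nat -> R -> R;
  m_imax : nat -> nat;
  m_imin : nat -> nat
}.

Definition valid (m : Model) : Prop :=
  0 < m_B m /\ 0 < m_amax m /\
  In 0 (m_E m) /\ (exists e, In e (m_E m) /\ 0 < e) /\
  (forall e, In e (m_E m) -> 0 <= e) /\
  forall n, (n < m_N m)%nat ->
    0 <= m_a m n /\
    0 <= m_q m n /\ m_q m n < m_p m n /\ m_p m n <= 1 /\
    m_q m n <= m_a m n / m_amax m /\ m_a m n / m_amax m <= m_p m n /\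
    0 <= m_beta m n /\
    (1 <= m_tau m n)%nat /\ (1 <= m_D m n)%nat /\
    (forall i, (i < m_K m n)%nat -> 0 <= m_eta m n i) /\
    sumR (m_eta m n) (m_K m n) = 1 /\
    (forall i j, (i < m_K m n)%nat -> (j < m_K m n)%nat -> 0 <= m_P m n i j) /\
    (forall i, (i < m_K m n)%nat -> sumR (m_P m n i) (m_K m n) = 1) /\
    (forall i, (i < m_K m n)%nat ->
       m_zeta m n i 0 = 0 /\
       (forall e, In e (m_E m) -> 0 <= m_zeta m n i e <= 1) /\
       (forall e, In e (m_E m) -> 0 < e -> 0 < m_zeta m n i e) /\
       (forall e1 e2, In e1 (m_E m) -> In e2 (m_E m) -> e1 < e2 ->
          m_zeta m n i e1 < m_zeta m n i e2)) /\
    (forall i j, (i < m_K m n)%nat -> (j < m_K m n)%nat ->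
       (forall e, In e (m_E m) -> m_zeta m n i e >= m_zeta m n j e) \/
       (forall e, In e (m_E m) -> m_zeta m n i e <= m_zeta m n j e)) /\
    (m_imax m n < m_K m n)%nat /\ (m_imin m n < m_K m n)%nat /\
    (forall i e, (i < m_K m n)%nat -> In e (m_E m) ->
       m_zeta m n (m_imin m n) e <= m_zeta m n i e <= m_zeta m n (m_imax m n) e).

Section Functions.
Variable m : Model.
Variable lam : R.

Definition Epos := filter posb (m_E m).
Definition atil (n : nat) : R :=
  (m_a m n - m_amax m * m_q m n) / (m_p m n - m_q m n).

Definition Vl (n tau : nat) : R :=
  match tau with
  | O => 0
  | _ => maxL (fun e => let z := m_zeta m n (m_imin m n) e in
               (1 - (1 - z) ^ tau) / z * (- lam * e + z * m_beta m n)) Epos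
  end.

Definition Vu (n tau : nat) : R :=
  sum_range 1 tau (fun z => maxL (fun e =>
     - lam * e + m_zeta m n (m_imax m n) e * (m_beta m n - Rmax 0 (Vl n (z - 1))))
     (m_E m)).

(* tilde V_n^l, meaningful for tau_n <= tau <= tau_n + D_n *)
Definition Vtl (n tau : nat) : R :=
  maxL (fun e => let z := m_zeta m n (m_imin m n) e in
        - (1 - m_p m n) * ((1 - (1 - z) ^ (tau - m_tau m n)) / z) * (lam * e)
        + m_p m n * ((1 - (1 - z) ^ tau) / z) * (- lam * e + z * m_beta m n)) Epos.

Definition Vtu (n tau : nat) : R :=
  sum_range (S (m_tau m n)) tau (fun z => maxL (fun e =>
     - lam * e + m_zeta m n (m_imax m n) e *
        (m_p m n * m_beta m n - Rmax 0 (Rmax (Vtl n (m_tau m n)) (Vtl n (z - 1)))))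
     (m_E m))
  + m_p m n * sum_range 1 (m_tau m n) (fun z => maxL (fun e =>
     - lam * e + m_zeta m n (m_imax m n) e * (m_beta m n - Rmax 0 (Vl n (z - 1))))
     (m_E m)).

(* imperfect-prediction value function V_n^I(0, tau, i) *)
Fixpoint VI (n tau i : nat) {struct tau} : R :=
  match tau with
  | O => 0
  | S t =>
    let cont := sumR (fun j => m_P m n i j * VI n t j) (m_K m n) in
    if Nat.leb (S t) (m_tau m n) then
      maxL (fun e => - lam * e + m_zeta m n i e * m_beta m n
                     + (1 - m_zeta m n i e) * cont) (m_E m)
    else if Nat.eqb (S t) (S (m_tau m n)) then
      maxL (fun e => - lam * e + m_zeta m n i e * m_p m n * m_beta m n
                     + m_p m n * (1 - m_zeta m n i e) * cont) (m_E m)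
    else
      maxL (fun e => - lam * e + m_zeta m n i e * m_p m n * m_beta m n
                     + (1 - m_zeta m n i e) * cont) (m_E m)
  end.

Definition gI : R :=
  lam * m_B m + sumR (fun n =>
    atil n * sumR (fun i => m_eta m n i * VI n (m_tau m n + m_D m n) i) (m_K m n)
    + (m_amax m - atil n) * m_q m n *
        sumR (fun i => m_eta m n i * VI n (m_tau m n) i) (m_K m n)) (m_N m).

Definition gIu : R :=
  lam * m_B m + sumR (fun n =>
    atil n * Rmin (m_p m n * m_beta m n) (Vtu n (m_tau m n + m_D m n))
    + (m_amax m - atil n) * m_q m n * Rmin (m_beta m n) (Vu n (m_tau m n))) (m_N m).

Definition gIl : R :=
  lam * m_B m + sumR (fun n =>
    atil n * Rmax 0 (Rmax (Vtl n (m_tau m n)) (Vtl n (m_tau m n + m_D m n)))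
    + (m_amax m - atil n) * m_q m n * Rmax 0 (Vl n (m_tau m n))) (m_N m).

End Functions.

From Stdlib Require Import Reals Lra Lia List.
Import ListNotations.
Open Scope R_scope.

(* The value V^I is sandwiched user by user.  Below it: always spending a
   fixed energy e while pretending the channel is in its worst state is a
   feasible policy, and its value obeys a linear recursion whose closed form
   is V^l (resp. tilde V^l after the prediction).  Above it: one Bellman step
   in any state is dominated by the step in the best state, in which the
   continuation value is replaced by the lower bound; summing these
   increments gives V^u (resp. tilde V^u).  Averaging over the initial state
   and over users, with the nonnegative weights tilde a_n and
   (a_max - tilde a_n) q_n, gives the bounds on g_I; the bounds on the minima
   follow by evaluating at the minimisers. *)

Lemma maxL_ub (f : R -> R) (l : list R) x : In x l -> f x <= maxL f l.
Proof.
  destruct l as [|a l]; [intros []|]; simpl.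
  revert a; induction l as [|b l IH]; intros a Hx; simpl in *.
  - destruct Hx as [<-|[]]; lra.
  - destruct Hx as [<-|[<-|Hx]].
    + eapply Rle_trans; [exact (IH a (or_introl eq_refl))|apply Rmax_r].
    + apply Rmax_l.
    + eapply Rle_trans; [exact (IH a (or_intror Hx))|apply Rmax_r].
Qed.

Lemma maxL_lub (f : R -> R) (l : list R) c :
  l <> [] -> (forall x, In x l -> f x <= c) -> maxL f l <= c.
Proof.
  destruct l as [|a l]; [congruence|]; intros _ H; simpl.
  assert (Ha : f a <= c) by (apply H; left; auto).
  assert (Hl : forall x, In x l -> f x <= c) by (intros; apply H; right; auto).
  clear H; induction l as [|b l IH]; simpl; [exact Ha|].
  apply Rmax_lub; [apply Hl; left; auto|apply IH; intros; apply Hl; right; auto].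
Qed.

Lemma sumR_le (f g : nat -> R) n :
  (forall k, (k < n)%nat -> f k <= g k) -> sumR f n <= sumR g n.
Proof.
  induction n as [|n IH]; simpl; intros H; [lra|].
  assert (sumR f n <= sumR g n) by (apply IH; intros; apply H; lia).
  pose proof (H n (Nat.lt_succ_diag_r n)); lra.
Qed.

Lemma sumR_mulr (w : nat -> R) c n : sumR (fun j => w j * c) n = sumR w n * c.
Proof. induction n as [|n IH]; simpl; [ring|rewrite IH; ring]. Qed.

Section ConvexCombination.
Variables (w V : nat -> R) (n : nat).
Hypotheses (Hw1 : sumR w n = 1) (Hw0 : forall j, (j < n)%nat -> 0 <= w j).

Lemma convex_comb_ge c :
  (forall j, (j < n)%nat -> c <= V j) -> c <= sumR (fun j => w j * V j) n.
Proof.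
  intros H; replace c with (sumR (fun j => w j * c) n) by (rewrite sumR_mulr, Hw1; ring).
  apply sumR_le; intros k Hk; apply Rmult_le_compat_l; auto.
Qed.

Lemma convex_comb_le c :
  (forall j, (j < n)%nat -> V j <= c) -> sumR (fun j => w j * V j) n <= c.
Proof.
  intros H; apply Rle_trans with (sumR (fun j => w j * c) n).
  - apply sumR_le; intros k Hk; apply Rmult_le_compat_l; auto.
  - rewrite sumR_mulr, Hw1; lra.
Qed.

End ConvexCombination.

Lemma sum_range_shift (a d : nat) f :
  sum_range (S a) (a + d) f = sumR (fun k => f (S a + k)%nat) d.
Proof. unfold sum_range; f_equal; lia. Qed.

(* [geom z k] = 1 + (1 - z) + ... + (1 - z)^(k-1), the expected number of
   attempts within k slots when each attempt succeeds with probability z. *)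
Fixpoint geom (z : R) (k : nat) : R :=
  match k with O => 0 | S k' => 1 + (1 - z) * geom z k' end.

Lemma geom_closed z k : z <> 0 -> (1 - (1 - z) ^ k) / z = geom z k.
Proof. intros Hz; induction k as [|k IH]; simpl; [|rewrite <- IH]; field; auto. Qed.

Lemma geom_bounds z k : 0 < z <= 1 -> 0 <= geom z k /\ z * geom z k <= 1.
Proof. intros Hz; induction k as [|k [IH0 IH1]]; simpl; [lra|split; nra]. Qed.

Lemma bellman_le_max a z Q C :
  a <= 0 -> 0 <= z <= 1 -> C <= Q -> a + z * Q + (1 - z) * C <= Q.
Proof. intros; nra. Qed.

Lemma bellman_mono a zmin z Q W C :
  0 <= zmin <= z -> z <= 1 -> W <= Q -> W <= C ->
  a + zmin * Q + (1 - zmin) * W <= a + z * Q + (1 - z) * C.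
Proof.
  intros Hz Hz1 HQ HC.
  assert (0 <= (z - zmin) * (Q - W)) by (apply Rmult_le_pos; lra).
  assert (0 <= (1 - z) * (C - W)) by (apply Rmult_le_pos; lra).
  nra.
Qed.

(* One step in the best state, with the continuation lower bound L in place
   of the actual continuation C, dominates one step in any state. *)
Lemma bellman_le_best a z zM Q L C S :
  0 <= z <= zM -> L <= C -> C <= Q -> C <= S ->
  a + z * Q + (1 - z) * C <= S + (a + zM * (Q - L)).
Proof.
  intros Hz HL HQ HS.
  assert (z * (Q - C) <= z * (Q - L)) by (apply Rmult_le_compat_l; lra).
  assert (z * (Q - L) <= zM * (Q - L)) by (apply Rmult_le_compat_r; lra).
  nra.
Qed.

Lemma Epos_spec m e : In e (Epos m) <-> In e (m_E m) /\ 0 < e.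
Proof.
  unfold Epos, posb; rewrite filter_In.
  destruct (Rlt_dec 0 e); intuition (congruence || lra).
Qed.

Section User.
Variables (m : Model) (lam : R) (n : nat).
Hypotheses (Hm : valid m) (Hn : (n < m_N m)%nat) (Hlam : 0 <= lam).

Local Notation zeta := (m_zeta m n).
Local Notation beta := (m_beta m n).
Local Notation p := (m_p m n).
Local Notation tau := (m_tau m n).
Local Notation K := (m_K m n).
Local Notation imin := (m_imin m n).
Local Notation imax := (m_imax m n).
Local Notation V := (VI m lam n).

Let user_valid := proj2 (proj2 (proj2 (proj2 (proj2 Hm)))) n Hn.

Lemma E0 : In 0 (m_E m).
Proof. now pose proof Hm as (_&_&H&_). Qed.

Lemma E_nonempty : m_E m <> [].
Proof. intros HE; pose proof E0 as H0; rewrite HE in H0; destruct H0. Qed.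

Lemma E_ge0 e : In e (m_E m) -> 0 <= e.
Proof. pose proof Hm as (_&_&_&_&H&_); apply H. Qed.

Lemma Epos_nonempty : Epos m <> [].
Proof.
  pose proof Hm as (_&_&_&(e&He&He0)&_); intros HE.
  assert (Hin : In e (Epos m)) by (apply Epos_spec; auto).
  rewrite HE in Hin; destruct Hin.
Qed.

Lemma beta_ge0 : 0 <= beta.
Proof. now destruct user_valid as (_&_&_&_&_&_&H&_). Qed.

Lemma q_lt_p : 0 <= m_q m n < p.
Proof. now destruct user_valid as (_&H0&H1&_). Qed.

Lemma p_le1 : p <= 1.
Proof. now destruct user_valid as (_&_&_&H&_). Qed.

Lemma atil_range : 0 <= atil m n <= m_amax m.
Proof.
  pose proof Hm as (_&Hamax&_).
  destruct user_valid as (_&Hq&Hqp&_&Hqa&Hap&_).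
  assert (Ha : m_a m n = m_a m n / m_amax m * m_amax m) by (field; lra).
  assert (H1 : m_q m n * m_amax m <= m_a m n)
    by (rewrite Ha; apply Rmult_le_compat_r; lra).
  assert (H2 : m_a m n <= p * m_amax m)
    by (rewrite Ha; apply Rmult_le_compat_r; lra).
  assert (Hi : 0 < / (p - m_q m n)) by (apply Rinv_0_lt_compat; lra).
  unfold atil, Rdiv; split.
  - apply Rmult_le_pos; lra.
  - apply Rle_trans with (m_amax m * (p - m_q m n) * / (p - m_q m n)).
    + apply Rmult_le_compat_r; lra.
    + right; field; lra.
Qed.

Lemma eta_mean_ge (W : nat -> R) c :
  (forall i, (i < K)%nat -> c <= W i) -> c <= sumR (fun i => m_eta m n i * W i) K.
Proof.
  destruct user_valid as (_&_&_&_&_&_&_&_&_&Heta&Hsum&_).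
  apply convex_comb_ge; auto.
Qed.

Lemma eta_mean_le (W : nat -> R) c :
  (forall i, (i < K)%nat -> W i <= c) -> sumR (fun i => m_eta m n i * W i) K <= c.
Proof.
  destruct user_valid as (_&_&_&_&_&_&_&_&_&Heta&Hsum&_).
  apply convex_comb_le; auto.
Qed.

Lemma zeta_0 i : (i < K)%nat -> zeta i 0 = 0.
Proof.
  destruct user_valid as (_&_&_&_&_&_&_&_&_&_&_&_&_&Hz&_).
  intros Hi; now destruct (Hz i Hi).
Qed.

Lemma zeta_range i e : (i < K)%nat -> In e (m_E m) -> 0 <= zeta i e <= 1.
Proof.
  destruct user_valid as (_&_&_&_&_&_&_&_&_&_&_&_&_&Hz&_).
  intros Hi; destruct (Hz i Hi) as (_&H&_); auto.
Qed.

Lemma zeta_between i e :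
  (i < K)%nat -> In e (m_E m) -> zeta imin e <= zeta i e <= zeta imax e.
Proof. destruct user_valid as (_&_&_&_&_&_&_&_&_&_&_&_&_&_&_&_&_&H); apply H. Qed.

Lemma zeta_imin_pos e : In e (Epos m) -> 0 < zeta imin e <= 1.
Proof.
  intros [HeE He0]%Epos_spec.
  destruct user_valid as (_&_&_&_&_&_&_&_&_&_&_&_&_&Hz&_&_&Himin&_).
  destruct (Hz _ Himin) as (_&H01&Hpos&_).
  specialize (H01 e HeE); specialize (Hpos e HeE He0); lra.
Qed.

Definition cont (t i : nat) : R := sumR (fun j => m_P m n i j * V t j) K.

Lemma cont_ge c t i :
  (i < K)%nat -> (forall j, (j < K)%nat -> c <= V t j) -> c <= cont t i.
Proof.
  destruct user_valid as (_&_&_&_&_&_&_&_&_&_&_&HP&HPs&_).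
  intros Hi; apply convex_comb_ge; auto.
Qed.

Lemma cont_le c t i :
  (i < K)%nat -> (forall j, (j < K)%nat -> V t j <= c) -> cont t i <= c.
Proof.
  destruct user_valid as (_&_&_&_&_&_&_&_&_&_&_&HP&HPs&_).
  intros Hi; apply convex_comb_le; auto.
Qed.

Lemma VI_S_before t i : (S t <= tau)%nat ->
  V (S t) i = maxL (fun e => - lam * e + zeta i e * beta
                             + (1 - zeta i e) * cont t i) (m_E m).
Proof. intros H; cbn [VI]; now rewrite (proj2 (Nat.leb_le _ _) H). Qed.

Lemma VI_S_tau i :
  V (S tau) i = maxL (fun e => - lam * e + zeta i e * p * beta
                               + p * (1 - zeta i e) * cont tau i) (m_E m).
Proof.
  cbn [VI]; rewrite (proj2 (Nat.leb_gt (S tau) tau) (Nat.lt_succ_diag_r _)).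
  now rewrite Nat.eqb_refl.
Qed.

Lemma VI_S_after t i : (tau < t)%nat ->
  V (S t) i = maxL (fun e => - lam * e + zeta i e * p * beta
                             + (1 - zeta i e) * cont t i) (m_E m).
Proof.
  intros H; cbn [VI].
  rewrite (proj2 (Nat.leb_gt (S t) tau)) by lia.
  now rewrite (proj2 (Nat.eqb_neq (S t) (S tau))) by lia.
Qed.

Lemma VI_ge0 t i : (i < K)%nat -> 0 <= V t i.
Proof.
  revert i; induction t as [|t IH]; intros i Hi; [simpl; lra|].
  assert (HC : 0 <= cont t i) by (apply cont_ge; auto).
  pose proof p_le1; pose proof q_lt_p.
  destruct (Nat.le_gt_cases (S t) tau) as [Hb|Ha];
    [|destruct (Nat.eq_dec t tau) as [->|Hne]];
    [rewrite VI_S_before by auto|rewrite VI_S_tau|rewrite VI_S_after by lia];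
    (eapply Rle_trans; [|apply maxL_ub; exact E0]);
    rewrite (zeta_0 i Hi); nra.
Qed.

Lemma VI_le_beta t i : (i < K)%nat -> V t i <= beta.
Proof.
  revert i; induction t as [|t IH]; intros i Hi; [simpl; apply beta_ge0|].
  assert (HC : cont t i <= beta) by (apply cont_le; auto).
  pose proof p_le1; pose proof q_lt_p; pose proof beta_ge0.
  assert (Hstep : forall e, In e (m_E m) -> forall c, c = 1 \/ c = p ->
    - lam * e + zeta i e * (c * beta) + (1 - zeta i e) * (c * cont t i) <= beta).
  { intros e He c Hc; pose proof (zeta_range i e Hi He); pose proof (E_ge0 e He).
    apply Rle_trans with (c * beta); [|destruct Hc as [->| ->]; nra].
    apply bellman_le_max; [nra|lra|destruct Hc as [->| ->]; nra]. }
  destruct (Nat.le_gt_cases (S t) tau) as [Hb|Ha];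
    [|destruct (Nat.eq_dec t tau) as [->|Hne]];
    [rewrite VI_S_before by auto|rewrite VI_S_tau|rewrite VI_S_after by lia];
    apply maxL_lub; try exact E_nonempty; intros e He.
  - specialize (Hstep e He 1 (or_introl eq_refl)); lra.
  - specialize (Hstep e He p (or_intror eq_refl)); lra.
  - specialize (Hstep e He 1 (or_introl eq_refl)); pose proof (zeta_range i e Hi He).
    assert (zeta i e * p * beta <= zeta i e * beta)
      by (rewrite Rmult_assoc; apply Rmult_le_compat_l; nra).
    lra.
Qed.

Lemma VI_le_p_beta d i : (i < K)%nat -> V (tau + S d) i <= p * beta.
Proof.
  revert i; induction d as [|d IH]; intros i Hi.
  - rewrite Nat.add_1_r, VI_S_tau; apply maxL_lub; [exact E_nonempty|].
    intros e He; pose proof (zeta_range i e Hi He); pose proof (E_ge0 e He).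
    assert (cont tau i <= beta) by (apply cont_le; auto using VI_le_beta).
    pose proof q_lt_p.
    assert (0 <= p * (1 - zeta i e) * (beta - cont tau i))
      by (apply Rmult_le_pos; [apply Rmult_le_pos|]; lra).
    nra.
  - replace (tau + S (S d))%nat with (S (tau + S d)) by lia.
    rewrite VI_S_after by lia; apply maxL_lub; [exact E_nonempty|].
    intros e He; pose proof (zeta_range i e Hi He); pose proof (E_ge0 e He).
    replace (- lam * e + zeta i e * p * beta + (1 - zeta i e) * cont (tau + S d) i)
      with (- lam * e + zeta i e * (p * beta) + (1 - zeta i e) * cont (tau + S d) i)
      by ring.
    apply bellman_le_max; [nra|lra|apply cont_le; auto].
Qed.

(* Value of always spending e as if the channel were in its worst state. *)
Definition fixed_val (e : R) (t : nat) : R :=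
  geom (zeta imin e) t * (- lam * e + zeta imin e * beta).

Lemma fixed_val_S e t : fixed_val e (S t) =
  - lam * e + zeta imin e * beta + (1 - zeta imin e) * fixed_val e t.
Proof. unfold fixed_val; simpl; ring. Qed.

Lemma fixed_val_le_beta e t : In e (Epos m) -> fixed_val e t <= beta.
Proof.
  intros He; pose proof (zeta_imin_pos e He) as Hz.
  apply Epos_spec in He as [_ He0].
  destruct (geom_bounds (zeta imin e) t Hz) as [A0 A1].
  pose proof beta_ge0; unfold fixed_val.
  assert (0 <= geom (zeta imin e) t * (lam * e)) by (apply Rmult_le_pos; nra).
  assert (zeta imin e * geom (zeta imin e) t * beta <= 1 * beta)
    by (apply Rmult_le_compat_r; lra).
  nra.
Qed.

Lemma fixed_val_le_VI e t i :
  In e (Epos m) -> (t <= tau)%nat -> (i < K)%nat -> fixed_val e t <= V t i.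
Proof.
  intros He; pose proof He as [HeE _]%Epos_spec.
  revert i; induction t as [|t IH]; intros i Ht Hi; [unfold fixed_val; simpl; lra|].
  rewrite VI_S_before, fixed_val_S by auto.
  eapply Rle_trans; [|apply maxL_ub; exact HeE].
  pose proof (zeta_range i e Hi HeE); pose proof (zeta_between i e Hi HeE).
  pose proof (zeta_imin_pos e He).
  apply bellman_mono; try lra.
  - apply fixed_val_le_beta; auto.
  - apply cont_ge; auto; intros; apply IH; auto; lia.
Qed.

Lemma Vl_le_of t c :
  (t = O -> 0 <= c) -> (forall e, In e (Epos m) -> fixed_val e t <= c) -> Vl m lam n t <= c.
Proof.
  intros H0 H; destruct t as [|t]; [simpl; auto|].
  unfold Vl; apply maxL_lub; [exact Epos_nonempty|]; intros e He.
  pose proof (zeta_imin_pos e He); rewrite geom_closed by lra; apply H; auto.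
Qed.

Lemma Vl_le_VI t i : (t <= tau)%nat -> (i < K)%nat -> Vl m lam n t <= V t i.
Proof.
  intros Ht Hi; apply Vl_le_of.
  - intros ->; simpl; lra.
  - intros e He; apply fixed_val_le_VI; auto.
Qed.

(* Value of the same policy once the prediction is made: with probability
   [p] the packet is real, otherwise energy is wasted during the [t - tau]
   slots before the false alarm is detected. *)
Definition pred_val (e : R) (t : nat) : R :=
  - (1 - p) * geom (zeta imin e) (t - tau) * (lam * e)
  + p * geom (zeta imin e) t * (- lam * e + zeta imin e * beta).

Lemma pred_val_tau e : pred_val e tau = p * fixed_val e tau.
Proof. unfold pred_val, fixed_val; rewrite Nat.sub_diag; simpl; ring. Qed.

Lemma pred_val_S e t : (tau <= t)%nat -> pred_val e (S t) =
  - lam * e + zeta imin e * (p * beta) + (1 - zeta imin e) * pred_val e t.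
Proof.
  intros H; unfold pred_val.
  replace (S t - tau)%nat with (S (t - tau)) by lia; cbn [geom]; ring.
Qed.

Lemma pred_val_le e t : In e (Epos m) -> pred_val e t <= p * beta.
Proof.
  intros He; pose proof (zeta_imin_pos e He) as Hz.
  apply Epos_spec in He as [_ He0].
  destruct (geom_bounds (zeta imin e) t Hz) as [A0 A1].
  destruct (geom_bounds (zeta imin e) (t - tau) Hz) as [B0 B1].
  pose proof beta_ge0; pose proof q_lt_p; pose proof p_le1; unfold pred_val.
  assert (0 <= (1 - p) * geom (zeta imin e) (t - tau) * (lam * e))
    by (apply Rmult_le_pos; [apply Rmult_le_pos|]; nra).
  assert (0 <= p * geom (zeta imin e) t * (lam * e))
    by (apply Rmult_le_pos; [apply Rmult_le_pos|]; nra).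
  assert (p * (zeta imin e * geom (zeta imin e) t) * beta <= p * 1 * beta)
    by (apply Rmult_le_compat_r; [lra|apply Rmult_le_compat_l; lra]).
  nra.
Qed.

(* Choosing e = 0 in every slot after tau keeps the fraction p of the value
   secured at tau. *)
Lemma p_fixed_val_le_VI e d i :
  In e (Epos m) -> (i < K)%nat -> p * fixed_val e tau <= V (tau + d) i.
Proof.
  intros He; pose proof q_lt_p; pose proof p_le1.
  revert i; induction d as [|d IH]; intros i Hi.
  - rewrite Nat.add_0_r.
    pose proof (fixed_val_le_VI e tau i He (le_n _) Hi); pose proof (VI_ge0 tau i Hi).
    destruct (Rle_dec 0 (fixed_val e tau)); nra.
  - replace (tau + S d)%nat with (S (tau + d)) by lia.
    destruct d as [|d].
    + rewrite Nat.add_0_r, VI_S_tau.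
      eapply Rle_trans; [|apply maxL_ub; exact E0]; rewrite (zeta_0 i Hi).
      assert (fixed_val e tau <= cont tau i)
        by (apply cont_ge; auto; intros; apply fixed_val_le_VI; auto).
      nra.
    + rewrite VI_S_after by lia.
      eapply Rle_trans; [|apply maxL_ub; exact E0]; rewrite (zeta_0 i Hi).
      assert (p * fixed_val e tau <= cont (tau + S d) i) by (apply cont_ge; auto).
      lra.
Qed.

Lemma pred_val_le_VI e d i :
  In e (Epos m) -> (i < K)%nat -> pred_val e (tau + d) <= V (tau + d) i.
Proof.
  intros He; pose proof He as [HeE _]%Epos_spec.
  pose proof (zeta_imin_pos e He); pose proof q_lt_p; pose proof p_le1.
  revert i; induction d as [|d IH]; intros i Hi.
  - rewrite Nat.add_0_r, pred_val_tau.
    rewrite <- (Nat.add_0_r tau) at 2; apply p_fixed_val_le_VI; auto.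
  - pose proof (zeta_range i e Hi HeE); pose proof (zeta_between i e Hi HeE).
    replace (tau + S d)%nat with (S (tau + d)) by lia.
    rewrite pred_val_S by lia.
    destruct d as [|d].
    + rewrite Nat.add_0_r, VI_S_tau, pred_val_tau.
      eapply Rle_trans; [|apply maxL_ub; exact HeE].
      replace (- lam * e + zeta i e * p * beta + p * (1 - zeta i e) * cont tau i)
        with (- lam * e + zeta i e * (p * beta) + (1 - zeta i e) * (p * cont tau i))
        by ring.
      pose proof (fixed_val_le_beta e tau He).
      assert (fixed_val e tau <= cont tau i)
        by (apply cont_ge; auto; intros; apply fixed_val_le_VI; auto).
      apply bellman_mono; try lra; apply Rmult_le_compat_l; lra.
    + rewrite VI_S_after by lia.
      eapply Rle_trans; [|apply maxL_ub; exact HeE].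
      replace (- lam * e + zeta i e * p * beta + (1 - zeta i e) * cont (tau + S d) i)
        with (- lam * e + zeta i e * (p * beta) + (1 - zeta i e) * cont (tau + S d) i)
        by ring.
      apply bellman_mono; try lra.
      * apply pred_val_le; auto.
      * apply cont_ge; auto.
Qed.

Lemma Vtl_le_of t c :
  (forall e, In e (Epos m) -> pred_val e t <= c) -> Vtl m lam n t <= c.
Proof.
  intros H; unfold Vtl; apply maxL_lub; [exact Epos_nonempty|]; intros e He.
  pose proof (zeta_imin_pos e He); rewrite !geom_closed by lra; apply H; auto.
Qed.

Lemma Vtl_tau_le_VI d i : (i < K)%nat -> Vtl m lam n tau <= V (tau + d) i.
Proof.
  intros Hi; apply Vtl_le_of; intros e He; rewrite pred_val_tau.
  apply p_fixed_val_le_VI; auto.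
Qed.

Lemma Vtl_le_VI d i : (i < K)%nat -> Vtl m lam n (tau + d) <= V (tau + d) i.
Proof. intros Hi; apply Vtl_le_of; intros e He; apply pred_val_le_VI; auto. Qed.

Lemma Vu_S t : Vu m lam n (S t) = Vu m lam n t +
  maxL (fun e => - lam * e + zeta imax e * (beta - Rmax 0 (Vl m lam n t))) (m_E m).
Proof.
  unfold Vu; rewrite (sum_range_shift 0 (S t)), (sum_range_shift 0 t); cbn [sumR].
  now replace (S 0 + t - 1)%nat with t by lia.
Qed.

Lemma VI_le_Vu t i : (t <= tau)%nat -> (i < K)%nat -> V t i <= Vu m lam n t.
Proof.
  revert i; induction t as [|t IH]; intros i Ht Hi; [simpl; unfold Vu, sum_range; simpl; lra|].
  rewrite VI_S_before, Vu_S by auto.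
  apply maxL_lub; [exact E_nonempty|]; intros e He.
  eapply Rle_trans; [|apply Rplus_le_compat_l, maxL_ub; exact He].
  pose proof (zeta_range i e Hi He); pose proof (zeta_between i e Hi He).
  apply bellman_le_best; [lra| | |].
  - apply Rmax_lub; apply cont_ge; auto using VI_ge0.
    intros; apply Vl_le_VI; auto; lia.
  - apply cont_le; auto using VI_le_beta.
  - apply cont_le; auto; intros; apply IH; auto; lia.
Qed.

Lemma Vtu_S d : Vtu m lam n (tau + S d) = Vtu m lam n (tau + d) +
  maxL (fun e => - lam * e + zeta imax e *
        (p * beta - Rmax 0 (Rmax (Vtl m lam n tau) (Vtl m lam n (tau + d))))) (m_E m).
Proof.
  unfold Vtu; rewrite !sum_range_shift; cbn [sumR].
  replace (S tau + d - 1)%nat with (tau + d)%nat by lia; ring.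
Qed.

Lemma Vtu_tau : Vtu m lam n (tau + 0) = p * Vu m lam n tau.
Proof. unfold Vtu; rewrite sum_range_shift; cbn [sumR]; unfold Vu; ring. Qed.

Lemma VI_S_tau_le_Vtu i : (i < K)%nat -> V (tau + 1) i <= Vtu m lam n (tau + 1).
Proof.
  intros Hi; pose proof q_lt_p; pose proof p_le1.
  rewrite Vtu_S, Vtu_tau, Nat.add_1_r, VI_S_tau, Nat.add_0_r.
  apply maxL_lub; [exact E_nonempty|]; intros e He.
  eapply Rle_trans; [|apply Rplus_le_compat_l, maxL_ub; exact He].
  pose proof (zeta_range i e Hi He); pose proof (zeta_between i e Hi He).
  replace (- lam * e + zeta i e * p * beta + p * (1 - zeta i e) * cont tau i)
    with (- lam * e + zeta i e * (p * beta) + (1 - zeta i e) * (p * cont tau i))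
    by ring.
  assert (HC0 : 0 <= cont tau i) by (apply cont_ge; auto using VI_ge0).
  assert (HCb : cont tau i <= beta) by (apply cont_le; auto using VI_le_beta).
  assert (HCu : cont tau i <= Vu m lam n tau)
    by (apply cont_le; auto; intros; apply VI_le_Vu; auto).
  assert (HVtl : Vtl m lam n tau <= p * cont tau i).
  { apply Vtl_le_of; intros e' He'; rewrite pred_val_tau.
    apply Rmult_le_compat_l; [lra|].
    apply cont_ge; auto; intros; apply fixed_val_le_VI; auto. }
  apply bellman_le_best; [lra| | |]; try (apply Rmult_le_compat_l; lra).
  repeat apply Rmax_lub; nra.
Qed.

Lemma VI_le_Vtu d i : (i < K)%nat -> V (tau + S d) i <= Vtu m lam n (tau + S d).
Proof.
  revert i; induction d as [|d IH]; intros i Hi; [now apply VI_S_tau_le_Vtu|].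
  rewrite Vtu_S.
  replace (tau + S (S d))%nat with (S (tau + S d)) by lia.
  rewrite VI_S_after by lia.
  apply maxL_lub; [exact E_nonempty|]; intros e He.
  eapply Rle_trans; [|apply Rplus_le_compat_l, maxL_ub; exact He].
  pose proof (zeta_range i e Hi He); pose proof (zeta_between i e Hi He).
  replace (- lam * e + zeta i e * p * beta + (1 - zeta i e) * cont (tau + S d) i)
    with (- lam * e + zeta i e * (p * beta) + (1 - zeta i e) * cont (tau + S d) i)
    by ring.
  apply bellman_le_best; [lra| | |].
  - repeat apply Rmax_lub; apply cont_ge; auto using VI_ge0, Vtl_tau_le_VI, Vtl_le_VI.
  - apply cont_le; auto using VI_le_p_beta.
  - apply cont_le; auto.
Qed.

Lemma user_lower_bounds :
  Rmax 0 (Rmax (Vtl m lam n tau) (Vtl m lam n (tau + m_D m n)))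
    <= sumR (fun i => m_eta m n i * V (tau + m_D m n) i) K
  /\ Rmax 0 (Vl m lam n tau) <= sumR (fun i => m_eta m n i * V tau i) K.
Proof.
  split; repeat apply Rmax_lub; apply eta_mean_ge;
    auto using VI_ge0, Vtl_tau_le_VI, Vtl_le_VI.
  intros; apply Vl_le_VI; auto.
Qed.

Lemma user_upper_bounds :
  sumR (fun i => m_eta m n i * V (tau + m_D m n) i) K
    <= Rmin (p * beta) (Vtu m lam n (tau + m_D m n))
  /\ sumR (fun i => m_eta m n i * V tau i) K <= Rmin beta (Vu m lam n tau).
Proof.
  assert (HD : (1 <= m_D m n)%nat) by now destruct user_valid as (_&_&_&_&_&_&_&_&HD&_).
  replace (m_D m n) with (S (Nat.pred (m_D m n))) by lia.
  split; apply Rmin_glb; apply eta_mean_le;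
    auto using VI_le_p_beta, VI_le_Vtu, VI_le_beta.
  intros; apply VI_le_Vu; auto.
Qed.

End User.

Lemma gI_sandwich m lam : valid m -> 0 <= lam -> gIl m lam <= gI m lam <= gIu m lam.
Proof.
  intros Hm Hl; unfold gIl, gI, gIu.
  split; apply Rplus_le_compat_l, sumR_le; intros n Hn;
    destruct (user_lower_bounds m lam n Hm Hn Hl);
    destruct (user_upper_bounds m lam n Hm Hn Hl);
    destruct (atil_range m n Hm Hn); pose proof (q_lt_p m n Hm Hn);
    assert (0 <= (m_amax m - atil m n) * m_q m n) by (apply Rmult_le_pos; lra);
    apply Rplus_le_compat; apply Rmult_le_compat_l; lra.
Qed.

Theorem corollary4 (m : Model) (Hm : valid m) :
  (forall lam, 0 <= lam -> gIl m lam <= gI m lam <= gIu m lam) /\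
  (forall l1 l2 l3, 0 <= l1 -> 0 <= l2 -> 0 <= l3 ->
     (forall mu, 0 <= mu -> gIl m l1 <= gIl m mu) ->
     (forall mu, 0 <= mu -> gI m l2 <= gI m mu) ->
     (forall mu, 0 <= mu -> gIu m l3 <= gIu m mu) ->
     gIl m l1 <= gI m l2 <= gIu m l3).
Proof.
  split; [intros lam; now apply gI_sandwich|].
  intros l1 l2 l3 H1 H2 H3 M1 M2 M3.
  destruct (gI_sandwich m l2 Hm H2); destruct (gI_sandwich m l3 Hm H3).
  specialize (M1 l2 H2); specialize (M2 l3 H3); split; lra.
Qed.
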